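(* Let $(G,L,F)$ be a Stackelberg game and $\mathbf{x}=[x_\pi]\in\mathbf{X}^{PS}$. Then there exists $\mathbf{x}'=[x'_\pi]\in\mathbf{X}^{PS}$ such that $x'_\varnothing=x_\varnothing$ and $x'_{\pi p}=x'_{\pi' p}$ for every $p\in L$ and every $\pi,\pi'\in\Pi_{L\setminus\{p\}}$ having the same set of entries.
   Context: A finite game is $G=(N,\{S_p\}_{p\in N},\{u_p\}_{p\in N})$ with players $N=\{1,\dots,n\}$, finite nonempty strategy sets $S_p$, and utilities $u_p:S\to\mathbb{R}$ on $S=\prod_{p\in N}S_p$; write $s=(s_p,s_{-p})$ with $s_{-p}\in S_{-p}=\prod_{q\neq p}S_q$. $\mathcal{X}=\Delta(S)$ is the set of probability distributions on $S$ and $u_p(x)=\sum_{s\in S}x(s)u_p(s)$ for $x\in\mathcal{X}$. For $P\subseteq N$, $\mathcal{X}^{CE}_P$ is the set of $x\in\mathcal{X}$ such that for every $p\in P$ and all $s_p\neq s_p'\in S_p$: $\sum_{s_{-p}\in S_{-p}} x(s_p,s_{-p})\,(u_p(s_p,s_{-p})-u_p(s_p',s_{-p}))\ge 0$; $\mathcal{X}^{CE}=\mathcal{X}^{CE}_N$ is the set of correlated equilibria of $G$. A Stackelberg game (SG) is a triple $(G,L,F)$ with $L\cup F=N$ and $L\cap F=\emptyset$ (leaders and followers). For $P\subseteq N$, $\Pi_P$ is the set of ordered subsets of $P$ (finite sequences of pairwise distinct elements of $P$, including the empty sequence $\varnothing$); for $\pi\in\Pi_P$ and $p\in P$ not occurring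 in $\pi$, $\pi p$ is $\pi$ with $p$ appended; when used as a set, $\pi$ means its set of entries. $\mathbf{X}=\prod_{\pi\in\Pi_L}\mathcal{X}^{CE}_{\pi\cup F}$, with elements $\mathbf{x}=[x_\pi]_{\pi\in\Pi_L}$. For $\mathbf{x}\in\mathbf{X}$ and $\pi\in\Pi_L$, $x_\pi$ is stable if $u_p(x_\pi)\ge u_p(x_{\pi p})$ for all $p\in L\setminus\pi$; $\mathbf{x}$ is stable if $x_\varnothing$ is stable, and perfectly stable if $x_\pi$ is stable for every $\pi\in\Pi_L$; $\mathbf{X}^{S}$ and $\mathbf{X}^{PS}$ denote the sets of stable and perfectly stable elements of $\mathbf{X}$. *)

From HB Require Import structures.
From mathcomp Require Import all_boot all_order all_algebra.
Set Implicit Arguments. Unset Strict Implicit. Unset Printing Implicit Defensive.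
Import Order.TTheory GRing.Theory Num.Theory.
Local Open Scope ring_scope.

Section Game.
Variables (R : realFieldType) (n : nat) (S : 'I_n -> finType).

Definition profile := {dffun forall p : 'I_n, S p}.

(* (b, s_{-p}) : the profile s with player p's strategy replaced by b *)
Definition deviate (s : profile) (p : 'I_n) (b : S p) : profile :=
  finfun (fun q : 'I_n =>
    match p =P q with
    | ReflectT e => ecast q (S q) e b
    | ReflectF _ => s q
    end).
Arguments deviate s p b : clear implicits.

Variable u : 'I_n -> profile -> R.

Definition is_dist (x : {ffun profile -> R}) : Prop :=
  (forall s, 0 <= x s) /\ \sum_s x s = 1.

Definition exp_util (x : {ffun profile -> R}) (p : 'I_n) : R :=
  \sum_s x s * u p s.

(* X^CE_P ; the sum over s_{-p} of x(s_p, s_{-p}) (...) is written as the sum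
   over profiles s with s p = a *)
Definition inCE (P : {set 'I_n}) (x : {ffun profile -> R}) : Prop :=
  is_dist x /\
  forall p : 'I_n, p \in P -> forall a b : S p, a != b ->
    0 <= \sum_(s : profile | s p == a) x s * (u p s - u p (deviate s p b)).

Definition ordered_subset (P : {set 'I_n}) (pi : seq 'I_n) : bool :=
  uniq pi && all (fun q => q \in P) pi.

Variable L : {set 'I_n}.  (* leaders; followers F = ~: L *)

Definition inX (x : seq 'I_n -> {ffun profile -> R}) : Prop :=
  forall pi, ordered_subset L pi -> inCE ([set q in pi] :|: ~: L) (x pi).

Definition stable_at (x : seq 'I_n -> {ffun profile -> R}) (pi : seq 'I_n) : Prop :=
  forall p, p \in L -> p \notin pi -> exp_util (x (rcons pi p)) p <= exp_util (x pi) p.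

Definition perfectly_stable (x : seq 'I_n -> {ffun profile -> R}) : Prop :=
  forall pi, ordered_subset L pi -> stable_at x pi.

End Game.

From HB Require Import structures.
From mathcomp Require Import all_boot all_order all_algebra.
Import Order.TTheory GRing.Theory Num.Theory.
Local Open Scope ring_scope.
Set Implicit Arguments. Unset Strict Implicit.

(* Given a perfectly stable family x, we build x' by letting
   each leader p choose, among all orderings of the leaders preceding it, the
   one that is worst for p:  x'_{pi p} := x_{sigma p}, where sigma is an
   ordering of the entries of pi minimising u_p(x_{sigma p}).  Since sigma
   depends only on the set of entries of pi, the symmetry requirement holds
   by construction, and x'_[::] := x_[::].
   Every x'_s is x_t for a reordering t of s, so x' inherits membership in
   bold X (the constraint set X^CE_{s u F} depends only on the entries of s).
   Stability of x' at pi follows from the chain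
     u_p(x'_{pi p}) <= u_p(x_{t p}) <= u_p(x_t) = u_p(x'_pi),
   where x'_pi = x_t: the first step is minimality of sigma, the second the
   stability of x at t. *)

Section ArgMin.
Variables (d : Order.disp_t) (R : orderType d) (T : eqType) (f : T -> R).

Definition argmin (d0 : T) (s : seq T) : T :=
  foldr (fun a b => if (f a <= f b)%O then a else b) d0 s.

Lemma argmin_mem d0 s : argmin d0 s \in d0 :: s.
Proof.
elim: s => [|a s IH] /=; first by rewrite inE.
case: ifP => _; first by rewrite !inE eqxx orbT.
by move: IH; rewrite !inE => /orP[->|->]; rewrite ?orbT.
Qed.

Lemma argmin_le d0 s a : a \in d0 :: s -> (f (argmin d0 s) <= f a)%O.
Proof.
elim: s a => [|b s IH] a /=; first by rewrite inE => /eqP->.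
have IHs c : c \in d0 :: s -> (f (argmin d0 s) <= f c)%O by exact: IH.
rewrite !inE -/(argmin d0 s) => /or3P[ad|/eqP->|as_];
  case: (leP (f b) (f (argmin d0 s))) => Hb.
- by apply: le_trans Hb (IHs _ _); rewrite inE ad.
- by apply: IHs; rewrite inE ad.
- exact: lexx.
- exact: ltW.
- by apply: le_trans Hb (IHs _ _); rewrite inE as_ orbT.
- by apply: IHs; rewrite inE as_ orbT.
Qed.
End ArgMin.

Section Entries.
Variable n : nat.

(* The entries of [pi], listed in increasing order: a canonical ordering that
   depends only on the set of entries of [pi]. *)
Definition sorted_entries (pi : seq 'I_n) : seq 'I_n :=
  [seq q <- enum 'I_n | q \in pi].

Lemma sorted_entries_uniq pi : uniq (sorted_entries pi).
Proof. by rewrite filter_uniq // enum_uniq. Qed.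

Lemma mem_sorted_entries pi : sorted_entries pi =i pi.
Proof. by move=> q; rewrite mem_filter mem_enum andbT. Qed.

Lemma sorted_entries_eq pi pi' :
  [set q in pi] = [set q in pi'] -> sorted_entries pi = sorted_entries pi'.
Proof.
move=> E; apply: eq_filter => q.
by rewrite -[q \in pi](in_set (fun q => q \in pi)) E inE.
Qed.

Definition orderings (pi : seq 'I_n) : seq (seq 'I_n) :=
  sorted_entries pi :: permutations (sorted_entries pi).

Lemma orderingsP pi t : t \in orderings pi <-> uniq t /\ t =i pi.
Proof.
rewrite inE mem_permutations; split.
  case/orP=> [/eqP->|Pt].
    by split; [exact: sorted_entries_uniq | exact: mem_sorted_entries].
  split; first by rewrite (perm_uniq Pt) sorted_entries_uniq.
  by move=> q; rewrite (perm_mem Pt) mem_sorted_entries.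
case=> ut et; apply/orP; right; apply: uniq_perm => // [|q].
  exact: sorted_entries_uniq.
by rewrite et mem_sorted_entries.
Qed.

Lemma ordered_subset_reorder (P : {set 'I_n}) s t :
  ordered_subset P s -> uniq t -> t =i s -> ordered_subset P t.
Proof.
case/andP=> _ sP ut ets; rewrite /ordered_subset ut /=.
by apply/allP => q; rewrite ets => /(allP sP).
Qed.
End Entries.

Section Construction.
Variables (R : realFieldType) (n : nat) (S : 'I_n -> finType).
Variables (u : 'I_n -> profile S -> R) (x : seq 'I_n -> {ffun profile S -> R}).

Definition worst_order (pi : seq 'I_n) (p : 'I_n) : seq 'I_n :=
  argmin (fun s => exp_util u (x (rcons s p)) p)
    (sorted_entries pi) (permutations (sorted_entries pi)).

Lemma worst_order_reorders pi p :
  uniq (worst_order pi p) /\ worst_order pi p =i pi.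
Proof. exact/(orderingsP pi)/argmin_mem. Qed.

Lemma worst_order_min pi p t : uniq t -> t =i pi ->
  exp_util u (x (rcons (worst_order pi p) p)) p <= exp_util u (x (rcons t p)) p.
Proof.
move=> ut et; apply: (argmin_le (fun s => exp_util u (x (rcons s p)) p)).
exact/(orderingsP pi).
Qed.

Definition xp (s : seq 'I_n) : {ffun profile S -> R} :=
  match rev s with
  | [::] => x [::]
  | p :: r => x (rcons (worst_order (rev r) p) p)
  end.

Lemma xp_rcons pi p : xp (rcons pi p) = x (rcons (worst_order pi p) p).
Proof. by rewrite /xp rev_rcons revK. Qed.

Lemma xp_reorder s : uniq s -> exists t, [/\ uniq t, t =i s & xp s = x t].
Proof.
case/lastP: s => [|pi p] us; first by exists [::].
have [uw ew] := worst_order_reorders pi p.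
move: us; rewrite rcons_uniq => /andP[pn _].
exists (rcons (worst_order pi p) p); split; last exact: xp_rcons.
- by rewrite rcons_uniq uw andbT (ew p).
- by move=> q; rewrite !mem_rcons !inE ew.
Qed.
End Construction.

Theorem theorem6 (R : realFieldType) (n : nat) (S : 'I_n -> finType)
    (S_nonempty : forall p : 'I_n, (0 < #|S p|)%N)
    (u : 'I_n -> profile S -> R) (L : {set 'I_n})
    (x : seq 'I_n -> {ffun profile S -> R}) :
  inX u L x -> perfectly_stable u L x ->
  exists x' : seq 'I_n -> {ffun profile S -> R},
    [/\ inX u L x', perfectly_stable u L x', x' [::] = x [::] &
      forall (p : 'I_n) (pi pi' : seq 'I_n), p \in L ->
        ordered_subset (L :\ p) pi -> ordered_subset (L :\ p) pi' ->
        [set q in pi] = [set q in pi'] ->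
        x' (rcons pi p) = x' (rcons pi' p)].
Proof.
move=> hX hPS; exists (xp u x); split=> //.
- move=> s os; have [t [ut et ->]] := xp_reorder u x (proj1 (andP os)).
  have -> : [set q in s] = [set q in t] by apply/setP => q; rewrite !inE et.
  exact/hX/(ordered_subset_reorder os).
- move=> s os q qL qs; have [t [ut et xst]] := xp_reorder u x (proj1 (andP os)).
  rewrite xp_rcons xst; apply: le_trans (worst_order_min u x q ut et) _.
  by apply: (hPS t (ordered_subset_reorder os ut et) q qL); rewrite et.
- by move=> p pi pi' _ _ _ E; rewrite !xp_rcons /worst_order (sorted_entries_eq E).
Qed.
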